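(* Let $X$ and $Y$ be bipartite graphs without isolated vertices. If $B_0(X)$ and $B_0(Y)$ are isomorphic as posets, then $X$ and $Y$ are isomorphic as graphs.
   Context: A graph $X$ is a set $V(X)$ with a symmetric subset $E(X)\subset V(X)\times V(X)$; $N(v)=\{w:(v,w)\in E(X)\}$, and $v$ is isolated if $N(v)=\emptyset$. $X$ is bipartite if there is a graph homomorphism to $K_2$ (vertices $\{1,2\}$, edges $(1,2),(2,1)$); in particular it has no loops. $B_0(X)$ is the poset whose elements are the unordered pairs $\{\sigma,\tau\}$ of non-empty (possibly infinite) subsets of $V(X)$ with $\sigma\times\tau\subset E(X)$, with $\alpha\le\beta$ iff for each $\sigma\in\alpha$ there is $\tau\in\beta$ with $\sigma\subset\tau$. *)

(* graphs are possibly infinite, so vertex sets are arbitrary Types. *)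
From Stdlib Require Import Classical FunctionalExtensionality PropExtensionality.

Definition symmetric_rel {V : Type} (E : V -> V -> Prop) : Prop :=
  forall v w, E v w -> E w v.

Definition isolated {V : Type} (E : V -> V -> Prop) (v : V) : Prop :=
  forall w, ~ E v w.

Definition bipartite {V : Type} (E : V -> V -> Prop) : Prop :=
  exists c : V -> bool, forall v w, E v w -> c v <> c w.

Definition nonempty {V : Type} (s : V -> Prop) : Prop := exists v, s v.

(* alpha is an element of B_0(X): alpha = {sigma, tau} (unordered pair, as a set
   of subsets) with sigma, tau non-empty and sigma x tau contained in E. *)
Definition is_B0 {V : Type} (E : V -> V -> Prop) (alpha : (V -> Prop) -> Prop) : Prop :=
  exists sigma tau : V -> Prop,
    nonempty sigma /\ nonempty tau /\
    (forall v w, sigma v -> tau w -> E v w) /\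
    (forall rho, alpha rho <-> (rho = sigma \/ rho = tau)).

Definition B0 {V : Type} (E : V -> V -> Prop) : Type :=
  { alpha : (V -> Prop) -> Prop | is_B0 E alpha }.

Definition B0_le {V : Type} {E : V -> V -> Prop} (a b : B0 E) : Prop :=
  forall sigma, proj1_sig a sigma ->
    exists tau, proj1_sig b tau /\ (forall v, sigma v -> tau v).

Definition poset_iso {V1 V2 : Type} (E1 : V1 -> V1 -> Prop) (E2 : V2 -> V2 -> Prop) : Prop :=
  exists (f : B0 E1 -> B0 E2) (g : B0 E2 -> B0 E1),
    (forall a, g (f a) = a) /\ (forall b, f (g b) = b) /\
    (forall a b, B0_le a b <-> B0_le (f a) (f b)).

Definition graph_iso {V1 V2 : Type} (E1 : V1 -> V1 -> Prop) (E2 : V2 -> V2 -> Prop) : Prop :=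
  exists (h : V1 -> V2) (k : V2 -> V1),
    (forall v, k (h v) = v) /\ (forall w, h (k w) = w) /\
    (forall v w, E1 v w <-> E2 (h v) (h w)).

From Stdlib Require Import Classical FunctionalExtensionality PropExtensionality.
From Stdlib Require Import ProofIrrelevance ClassicalEpsilon.

(* The atoms of B_0(X) are the pairs {{v}, {w}} with vw an edge.  In a
   triangle-free graph two atoms are the only atoms below some common upper
   bound exactly when their edges share a vertex, so a poset isomorphism of
   B_0 induces an isomorphism of line graphs.  A vertex v is sent to a vertex
   x whose star of edges is the image of the star of v: if v has two edges,
   x is the common vertex of their images (a third edge meeting both images
   must pass through x, or there would be a triangle); if v is a leaf with
   neighbour w, x is the end of the image of the edge vw not matched to w.
   The only ambiguity is an isolated edge, both of whose ends have the same
   star; there the 2-colourings decide. *)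

(* All section hypotheses are arguments of every lemma, so that the lemmas
   can be applied with the two graphs exchanged. *)
Set Default Proof Using "All".

Definition sing {V : Type} (v : V) : V -> Prop := fun z => z = v.

Definition triangle_free {V : Type} (E : V -> V -> Prop) : Prop :=
  forall x y z, E x y -> E y z -> E x z -> False.

Definition proper_coloring {V : Type} (E : V -> V -> Prop) (c : V -> bool) : Prop :=
  forall v w, E v w -> c v <> c w.

Definition bicolored_no_isolated {V : Type} (E : V -> V -> Prop) (c : V -> bool) : Prop :=
  symmetric_rel E /\ proper_coloring E c /\ forall v, ~ isolated E v.

Lemma sing_inj {V : Type} (u v : V) : sing u = sing v -> u = v.
Proof. intro e. change (sing v u). rewrite <- e. reflexivity. Qed.

Lemma subset_sing {V : Type} (rho : V -> Prop) v :
  nonempty rho -> (forall z, rho z -> z = v) -> rho = sing v.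
Proof.
  intros [z hz] H. apply functional_extensionality; intro u.
  apply propositional_extensionality. split; [apply H|].
  intros ->. rewrite <- (H z hz). exact hz.
Qed.

Lemma triangle_free_irrefl {V : Type} {E : V -> V -> Prop} :
  triangle_free E -> forall v, ~ E v v.
Proof. intros Etri v h. exact (Etri v v v h h h). Qed.

Lemma proper_coloring_triangle_free {V : Type} {E : V -> V -> Prop} {c : V -> bool} :
  proper_coloring E c -> triangle_free E.
Proof.
  intros Hc x y z hxy hyz hxz.
  pose proof (Hc _ _ hxy); pose proof (Hc _ _ hyz); pose proof (Hc _ _ hxz).
  destruct (c x), (c y), (c z); congruence.
Qed.

Section Atoms.
Context {V : Type} {E : V -> V -> Prop}.

Definition incident (v : V) (a : B0 E) : Prop := proj1_sig a (sing v).

Definition atom (a : B0 E) : Prop := forall x : B0 E, B0_le x a -> x = a.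

Definition share_vertex (a b : B0 E) : Prop := exists v, incident v a /\ incident v b.

Definition pair_bounded (a b : B0 E) : Prop :=
  exists c, B0_le a c /\ B0_le b c /\ forall d, atom d -> B0_le d c -> d = a \/ d = b.

Lemma B0_eq (a b : B0 E) : (forall rho, proj1_sig a rho <-> proj1_sig b rho) -> a = b.
Proof.
  destruct a as [a Ha], b as [b Hb]; cbn; intro H.
  assert (a = b) as <-.
  { apply functional_extensionality; intro rho. apply propositional_extensionality, H. }
  f_equal. apply proof_irrelevance.
Qed.

Lemma B0_component_nonempty (a : B0 E) rho : proj1_sig a rho -> nonempty rho.
Proof.
  destruct (proj2_sig a) as [s [t [hs [ht [_ Ha]]]]].
  intros [-> | ->]%Ha; assumption.
Qed.

Lemma incident_le (a c : B0 E) v :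
  B0_le a c -> incident v a -> exists tau, proj1_sig c tau /\ tau v.
Proof.
  intros Hac hv. destruct (Hac _ hv) as [tau [htau hsub]].
  exists tau. split; [exact htau | apply hsub; reflexivity].
Qed.

Lemma star_is_B0 v (W : V -> Prop) :
  nonempty W -> (forall w, W w -> E v w) -> is_B0 E (fun rho => rho = sing v \/ rho = W).
Proof.
  intros hW HE. exists (sing v), W.
  split; [exists v; reflexivity|]. split; [exact hW|]. split.
  - intros x w -> hw. exact (HE w hw).
  - intro rho. tauto.
Qed.

Lemma edge_is_B0 {v w : V} (h : E v w) :
  is_B0 E (fun rho => rho = sing v \/ rho = sing w).
Proof. apply star_is_B0; [exists w; reflexivity | intros z ->; exact h]. Qed.

Definition edge_pair {v w : V} (h : E v w) : B0 E := exist _ _ (edge_is_B0 h).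

Lemma incident_edge_pair {v w : V} (h : E v w) u :
  incident u (edge_pair h) <-> u = v \/ u = w.
Proof.
  split.
  - intros [e | e]; [left | right]; exact (sing_inj _ _ e).
  - intros [-> | ->]; [left | right]; reflexivity.
Qed.

Lemma edge_pair_mem {v w : V} (h : E v w) rho :
  proj1_sig (edge_pair h) rho <-> exists u, rho = sing u /\ incident u (edge_pair h).
Proof.
  split.
  - intros [-> | ->]; eexists; (split; [reflexivity | apply incident_edge_pair; tauto]).
  - intros [u [-> hu]]. exact hu.
Qed.

Lemma edge_pair_le {v w : V} (h : E v w) (c : B0 E) s t :
  proj1_sig c s -> proj1_sig c t -> s v -> t w -> B0_le (edge_pair h) c.
Proof.
  intros hs ht hv hw rho [-> | ->]; [exists s | exists t]; split; auto; intros z ->; assumption.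
Qed.

Lemma atom_edge_pair (a : B0 E) : atom a -> exists v w (h : E v w), a = edge_pair h.
Proof.
  intro Ha. destruct (proj2_sig a) as [s [t [[v hv] [[w hw] [hst Hst]]]]].
  exists v, w, (hst v w hv hw). symmetry. apply Ha.
  apply (edge_pair_le _ a s t); [apply Hst; now left | apply Hst; now right | exact hv | exact hw].
Qed.

Lemma atom_eq (a b : B0 E) :
  atom a -> atom b -> (forall u, incident u a <-> incident u b) -> a = b.
Proof.
  intros [v [w [h ->]]]%atom_edge_pair [v' [w' [h' ->]]]%atom_edge_pair Hab.
  apply B0_eq; intro rho. rewrite !edge_pair_mem.
  split; intros [u [-> hu]]; exists u; (split; [reflexivity | apply Hab, hu]).
Qed.

Hypothesis Esym : symmetric_rel E.
Hypothesis Etri : triangle_free E.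

Lemma edge_pair_atom {v w : V} (h : E v w) : atom (edge_pair h).
Proof.
  intros x Hx. destruct (proj2_sig x) as [s [t [_ [_ [hst Hx_st]]]]].
  assert (Hsing : forall rho, proj1_sig x rho -> rho = sing v \/ rho = sing w).
  { intros rho hrho. pose proof (B0_component_nonempty x rho hrho) as hne.
    destruct (Hx rho hrho) as [tau [[-> | ->] hsub]]; [left | right];
      exact (subset_sing rho _ hne hsub). }
  apply B0_eq; intro rho. rewrite Hx_st. cbn.
  destruct (Hsing s (proj2 (Hx_st s) (or_introl eq_refl))) as [-> | ->],
           (Hsing t (proj2 (Hx_st t) (or_intror eq_refl))) as [-> | ->];
    solve [tauto | exfalso; eapply (triangle_free_irrefl Etri), hst; reflexivity].
Qed.

Lemma atom_ends (a : B0 E) :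
  atom a -> exists v w, E v w /\ v <> w /\ forall u, incident u a <-> u = v \/ u = w.
Proof.
  intros [v [w [h ->]]]%atom_edge_pair. exists v, w. split; [exact h|]. split.
  - intros ->. exact (triangle_free_irrefl Etri w h).
  - apply incident_edge_pair.
Qed.

Lemma atom_incident_iff (a : B0 E) x y :
  atom a -> incident x a -> incident y a -> x <> y ->
  forall u, incident u a <-> u = x \/ u = y.
Proof.
  intros Ha hx hy nxy. destruct (atom_ends a Ha) as [v [w [_ [_ Hvw]]]].
  intro u. rewrite Hvw. rewrite Hvw in hx, hy.
  destruct hx as [-> | ->], hy as [-> | ->]; solve [tauto | now contradiction nxy].
Qed.

Lemma atom_edge (a : B0 E) x y :
  atom a -> incident x a -> incident y a -> x <> y -> E x y.
Proof.
  intros Ha hx hy nxy. destruct (atom_ends a Ha) as [v [w [h [_ Hvw]]]].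
  rewrite Hvw in hx, hy.
  destruct hx as [-> | ->], hy as [-> | ->];
    solve [exact h | apply Esym, h | now contradiction nxy].
Qed.

Lemma atom_eq_of_incident2 (a b : B0 E) x y :
  atom a -> atom b -> incident x a -> incident y a -> incident x b -> incident y b ->
  x <> y -> a = b.
Proof.
  intros Ha Hb hxa hya hxb hyb nxy. apply (atom_eq a b Ha Hb). intro u.
  rewrite (atom_incident_iff a x y Ha hxa hya nxy u), (atom_incident_iff b x y Hb hxb hyb nxy u).
  tauto.
Qed.

Lemma atom_eq_edge_pair (a : B0 E) {v w : V} (h : E v w) :
  atom a -> incident v a -> incident w a -> a = edge_pair h.
Proof.
  intros Ha hva hwa. apply (atom_eq_of_incident2 a _ v w Ha (edge_pair_atom h) hva hwa).
  - apply incident_edge_pair. now left.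
  - apply incident_edge_pair. now right.
  - intros ->. exact (triangle_free_irrefl Etri w h).
Qed.

Lemma atom_other_end (a : B0 E) v :
  atom a -> incident v a -> exists w, w <> v /\ forall u, incident u a <-> u = v \/ u = w.
Proof.
  intros Ha hv. destruct (atom_ends a Ha) as [p [q [_ [npq Hpq]]]].
  rewrite Hpq in hv. destruct hv as [-> | ->].
  - exists q. split; [exact (not_eq_sym npq) | exact Hpq].
  - exists p. split; [exact npq | intro u; rewrite Hpq; tauto].
Qed.

Lemma share_both_incident (a b c : B0 E) v :
  atom a -> atom b -> atom c -> a <> b -> incident v a -> incident v b ->
  share_vertex c a -> share_vertex c b -> incident v c.
Proof.
  intros Ha Hb Hc nab hva hvb [p [hpc hpa]] [q [hqc hqb]].
  apply NNPP; intro nvc.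
  assert (nvp : v <> p) by (intros <-; contradiction).
  assert (nvq : v <> q) by (intros <-; contradiction).
  assert (npq : p <> q).
  { intros <-. apply nab. exact (atom_eq_of_incident2 a b v p Ha Hb hva hpa hvb hqb nvp). }
  exact (Etri v p q (atom_edge a v p Ha hva hpa nvp) (atom_edge c p q Hc hpc hqc npq)
              (atom_edge b v q Hb hvb hqb nvq)).
Qed.

(* Otherwise both ends of d lie in the other component, which with any vertex
   of this component spans a triangle. *)
Lemma atom_le_meets (d c : B0 E) sigma :
  atom d -> B0_le d c -> proj1_sig c sigma -> exists p, incident p d /\ sigma p.
Proof.
  intros Hd Hdc hsigma.
  destruct (proj2_sig c) as [s [t [[z hz] [[z' hz'] [hst Hc]]]]].
  destruct (atom_ends d Hd) as [p [q [Epq [_ Hpq]]]].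
  assert (hp : incident p d) by (apply Hpq; now left).
  assert (hq : incident q d) by (apply Hpq; now right).
  assert (Hside : forall u, incident u d -> s u \/ t u).
  { intros u hu. destruct (incident_le d c u Hdc hu) as [tau [[-> | ->]%Hc htau]]; auto. }
  apply NNPP; intro Hnone.
  assert (Hout : forall u, incident u d -> ~ sigma u) by (intros u hu hs; apply Hnone; eauto).
  apply Hc in hsigma. destruct hsigma as [-> | ->].
  - destruct (Hside p hp) as [hps | hpt]; [exact (Hout p hp hps)|].
    destruct (Hside q hq) as [hqs | hqt]; [exact (Hout q hq hqs)|].
    exact (Etri z p q (hst z p hz hpt) Epq (hst z q hz hqt)).
  - destruct (Hside p hp) as [hps | hpt]; [|exact (Hout p hp hpt)].
    destruct (Hside q hq) as [hqs | hqt]; [|exact (Hout q hq hqt)].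
    exact (Etri p q z' Epq (hst q z' hqs hz') (hst p z' hps hz')).
Qed.

Lemma pair_bounded_share (a b : B0 E) :
  atom a -> atom b -> pair_bounded a b -> share_vertex a b.
Proof.
  intros Ha Hb [c [Hac [Hbc Honly]]].
  destruct (proj2_sig c) as [s [t [_ [_ [hst Hc]]]]].
  destruct (atom_le_meets a c s Ha Hac) as [p [hpa hps]]; [apply Hc; now left|].
  destruct (atom_le_meets b c t Hb Hbc) as [q [hqb hqt]]; [apply Hc; now right|].
  pose proof (hst p q hps hqt) as h.
  assert (Hle : B0_le (edge_pair h) c)
    by (apply (edge_pair_le h c s t); auto; apply Hc; auto).
  destruct (Honly (edge_pair h) (edge_pair_atom h) Hle) as [<- | <-].
  - exists q. split; [apply incident_edge_pair; now right | exact hqb].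
  - exists p. split; [exact hpa | apply incident_edge_pair; now left].
Qed.

(* For edges vw and vu the bound is {{v}, {w, u}}. *)
Lemma share_pair_bounded (a b : B0 E) :
  atom a -> atom b -> share_vertex a b -> pair_bounded a b.
Proof.
  intros Ha Hb [v [hva hvb]].
  destruct (atom_other_end a v Ha hva) as [w [nwv Hw]].
  destruct (atom_other_end b v Hb hvb) as [u [nuv Hu]].
  assert (hwa : incident w a) by (apply Hw; now right).
  assert (hub : incident u b) by (apply Hu; now right).
  assert (Evw := atom_edge a v w Ha hva hwa (not_eq_sym nwv)).
  assert (Evu := atom_edge b v u Hb hvb hub (not_eq_sym nuv)).
  set (W := fun z => z = w \/ z = u).
  assert (HW : forall z, W z -> E v z) by (intros z [-> | ->]; assumption).
  set (c := exist _ _ (star_is_B0 v W (ex_intro _ w (or_introl eq_refl)) HW) : B0 E).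
  assert (hcv : proj1_sig c (sing v)) by (now left).
  assert (hcW : proj1_sig c W) by (now right).
  exists c. split; [|split].
  - rewrite (atom_eq_edge_pair a Evw Ha hva hwa).
    apply (edge_pair_le Evw c (sing v) W); [exact hcv | exact hcW | reflexivity | now left].
  - rewrite (atom_eq_edge_pair b Evu Hb hvb hub).
    apply (edge_pair_le Evu c (sing v) W); [exact hcv | exact hcW | reflexivity | now right].
  - intros d Hd Hdc.
    assert (Hdv : forall z, incident z d -> z = v \/ W z).
    { intros z hz. destruct (incident_le d c z Hdc hz) as [tau [[-> | ->] htau]]; auto. }
    destruct (atom_ends d Hd) as [p [q [Epq [npq Hpq]]]].
    assert (hp : incident p d) by (apply Hpq; now left).
    assert (hq : incident q d) by (apply Hpq; now right).
    destruct (Hdv p hp) as [-> | [-> | ->]], (Hdv q hq) as [-> | [-> | ->]];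
      solve [ now contradiction npq
            | left; apply (atom_eq_of_incident2 d a v w); auto
            | right; apply (atom_eq_of_incident2 d b v u); auto
            | exfalso; apply (Etri v w u); auto
            | exfalso; apply (Etri v u w); auto ].
Qed.

End Atoms.

Lemma bicolored_atom_at {V : Type} {E : V -> V -> Prop} {c : V -> bool} :
  bicolored_no_isolated E c -> forall v, exists a : B0 E, atom a /\ incident v a.
Proof.
  intros [Esym [Hc Hiso]] v.
  destruct (not_all_not_ex _ _ (Hiso v)) as [w h].
  exists (edge_pair h). split.
  - exact (edge_pair_atom Esym (proper_coloring_triangle_free Hc) h).
  - apply incident_edge_pair. now left.
Qed.

Definition order_iso {V1 V2 : Type} {E1 : V1 -> V1 -> Prop} {E2 : V2 -> V2 -> Prop}
  (f : B0 E1 -> B0 E2) (g : B0 E2 -> B0 E1) : Prop :=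
  (forall a, g (f a) = a) /\ (forall b, f (g b) = b) /\
  (forall a b, B0_le a b <-> B0_le (f a) (f b)).

Definition line_iso {V1 V2 : Type} {E1 : V1 -> V1 -> Prop} {E2 : V2 -> V2 -> Prop}
  (f : B0 E1 -> B0 E2) (g : B0 E2 -> B0 E1) : Prop :=
  (forall a, g (f a) = a) /\ (forall b, f (g b) = b) /\
  (forall a, atom a -> atom (f a)) /\ (forall b, atom b -> atom (g b)) /\
  (forall a b, atom a -> atom b -> share_vertex a b <-> share_vertex (f a) (f b)).

Section OrderIso.
Context {V1 V2 : Type} {E1 : V1 -> V1 -> Prop} {E2 : V2 -> V2 -> Prop}
  {f : B0 E1 -> B0 E2} {g : B0 E2 -> B0 E1}.
Hypothesis Hf : order_iso f g.

Lemma order_iso_sym : order_iso g f.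
Proof.
  destruct Hf as [gf [fg Hle]]. split; [exact fg | split; [exact gf|]].
  intros a b. rewrite (Hle (g a) (g b)), !fg. tauto.
Qed.

Lemma order_iso_atom (a : B0 E1) : atom a -> atom (f a).
Proof.
  destruct Hf as [gf [fg Hle]]. intros Ha y hy.
  rewrite <- (fg y). f_equal. apply Ha, Hle. rewrite fg. exact hy.
Qed.

End OrderIso.

Lemma order_iso_pair_bounded {V1 V2 : Type} {E1 : V1 -> V1 -> Prop} {E2 : V2 -> V2 -> Prop}
  {f : B0 E1 -> B0 E2} {g : B0 E2 -> B0 E1} (Hf : order_iso f g) (a b : B0 E1) :
  pair_bounded a b -> pair_bounded (f a) (f b).
Proof.
  pose proof Hf as [gf [fg Hle]]. intros [c [Hac [Hbc Honly]]].
  exists (f c). split; [apply Hle, Hac|]. split; [apply Hle, Hbc|].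
  intros d Hd Hdc.
  assert (Hgd : atom (g d)) by exact (order_iso_atom (order_iso_sym Hf) d Hd).
  assert (Hgdc : B0_le (g d) c) by (apply Hle; rewrite fg; exact Hdc).
  destruct (Honly (g d) Hgd Hgdc) as [e | e]; [left | right]; rewrite <- e, fg; reflexivity.
Qed.

Lemma order_iso_line_iso {V1 V2 : Type} {E1 : V1 -> V1 -> Prop} {E2 : V2 -> V2 -> Prop}
  {f : B0 E1 -> B0 E2} {g : B0 E2 -> B0 E1} (Hf : order_iso f g) :
  symmetric_rel E1 -> triangle_free E1 -> symmetric_rel E2 -> triangle_free E2 ->
  line_iso f g.
Proof.
  intros Es1 Et1 Es2 Et2.
  pose proof Hf as [gf [fg _]]. pose proof (order_iso_sym Hf) as Hg.
  split; [exact gf|]. split; [exact fg|].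
  split; [exact (order_iso_atom Hf)|]. split; [exact (order_iso_atom Hg)|].
  intros a b Ha Hb. split; intro H.
  - apply (pair_bounded_share Es2 Et2); try apply (order_iso_atom Hf); auto.
    apply (order_iso_pair_bounded Hf), (share_pair_bounded Es1 Et1); auto.
  - apply (pair_bounded_share Es1 Et1); auto. rewrite <- (gf a), <- (gf b).
    apply (order_iso_pair_bounded Hg), (share_pair_bounded Es2 Et2);
      try apply (order_iso_atom Hf); auto.
Qed.

Section LineIso.
Context {V1 V2 : Type} {E1 : V1 -> V1 -> Prop} {E2 : V2 -> V2 -> Prop}
  {f : B0 E1 -> B0 E2} {g : B0 E2 -> B0 E1}.
Hypothesis Hf : line_iso f g.

Lemma line_iso_sym : line_iso g f.
Proof.
  destruct Hf as [gf [fg [Hatf [Hatg Hsh]]]].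
  split; [exact fg|]. split; [exact gf|]. split; [exact Hatg|]. split; [exact Hatf|].
  intros a b Ha Hb. rewrite (Hsh (g a) (g b) (Hatg a Ha) (Hatg b Hb)), !fg. tauto.
Qed.

Lemma line_iso_atom (a : B0 E1) : atom a -> atom (f a).
Proof. exact (proj1 (proj2 (proj2 Hf)) a). Qed.

Lemma line_iso_share (a b : B0 E1) :
  atom a -> atom b -> share_vertex a b <-> share_vertex (f a) (f b).
Proof. exact (proj2 (proj2 (proj2 (proj2 Hf))) a b). Qed.

Lemma line_iso_inj (a b : B0 E1) : f a = f b -> a = b.
Proof. intro e. rewrite <- (proj1 Hf a), <- (proj1 Hf b), e. reflexivity. Qed.

End LineIso.

Definition same_star {V1 V2 : Type} {E1 : V1 -> V1 -> Prop} {E2 : V2 -> V2 -> Prop}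
  (f : B0 E1 -> B0 E2) (v : V1) (x : V2) : Prop :=
  forall a : B0 E1, atom a -> (incident v a <-> incident x (f a)).

(* A vertex has two same-star partners only at an isolated edge; the colours
   then select one of them. *)
Definition vertex_corr {V1 V2 : Type} {E1 : V1 -> V1 -> Prop} {E2 : V2 -> V2 -> Prop}
  (f : B0 E1 -> B0 E2) (c1 : V1 -> bool) (c2 : V2 -> bool) (v : V1) (x : V2) : Prop :=
  same_star f v x /\ ((exists x', x' <> x /\ same_star f v x') -> c1 v = c2 x).

Section VertexCorrespondence.
Context {V1 V2 : Type} {E1 : V1 -> V1 -> Prop} {E2 : V2 -> V2 -> Prop}
  {c1 : V1 -> bool} {c2 : V2 -> bool} {f : B0 E1 -> B0 E2} {g : B0 E2 -> B0 E1}.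
Hypothesis X1 : bicolored_no_isolated E1 c1.
Hypothesis X2 : bicolored_no_isolated E2 c2.
Hypothesis Hf : line_iso f g.

Let Es1 : symmetric_rel E1 := proj1 X1.
Let Et1 : triangle_free E1 := proper_coloring_triangle_free (proj1 (proj2 X1)).
Let Es2 : symmetric_rel E2 := proj1 X2.
Let Et2 : triangle_free E2 := proper_coloring_triangle_free (proj1 (proj2 X2)).

Lemma same_star_sym v x : same_star f v x <-> same_star g x v.
Proof.
  destruct Hf as [gf [fg [Hatf [Hatg _]]]]. split; intro H.
  - intros b Hb. rewrite (H (g b) (Hatg b Hb)), fg. tauto.
  - intros a Ha. rewrite (H (f a) (Hatf a Ha)), gf. tauto.
Qed.

Lemma same_star_of_two_atoms (a b : B0 E1) v :
  atom a -> atom b -> a <> b -> incident v a -> incident v b -> exists x, same_star f v x.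
Proof.
  intros Ha Hb nab hva hvb.
  destruct (proj1 (line_iso_share Hf a b Ha Hb) (ex_intro _ v (conj hva hvb))) as [x [hxa hxb]].
  exists x. intros c Hc. split; intro h.
  - apply (share_both_incident Es2 Et2 (f a) (f b) (f c) x); try apply (line_iso_atom Hf); auto.
    + intro e. exact (nab (line_iso_inj Hf a b e)).
    + apply (line_iso_share Hf c a Hc Ha). now exists v.
    + apply (line_iso_share Hf c b Hc Hb). now exists v.
  - apply (share_both_incident Es1 Et1 a b c v); auto.
    + apply (line_iso_share Hf c a Hc Ha). now exists x.
    + apply (line_iso_share Hf c b Hc Hb). now exists x.
Qed.

Lemma same_star_of_leaf (e : B0 E1) v w x :
  atom e -> incident v e -> incident w e -> v <> w ->
  (forall c, atom c -> incident v c -> c = e) -> incident x (f e) ->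
  (forall c, atom c -> c <> e -> incident w c -> ~ incident x (f c)) -> same_star f v x.
Proof.
  intros He hve hwe nvw Honly hxe Hw c Hc. split; intro h.
  - rewrite (Honly c Hc h). exact hxe.
  - destruct (classic (c = e)) as [-> | nce]; [exact hve|].
    destruct (proj2 (line_iso_share Hf c e Hc He) (ex_intro _ x (conj h hxe))) as [u [huc hue]].
    destruct (proj1 (atom_incident_iff Es1 Et1 e v w He hve hwe nvw u) hue) as [-> | ->];
      [exact huc|].
    exfalso. exact (Hw c Hc nce huc h).
Qed.

Lemma same_star_exists v : exists x, same_star f v x.
Proof.
  destruct (bicolored_atom_at X1 v) as [e [He hve]].
  destruct (classic (exists b, atom b /\ b <> e /\ incident v b)) as [[b [Hb [nbe hvb]]] | Hv].
  { exact (same_star_of_two_atoms b e v Hb He nbe hvb hve). }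
  assert (Honly : forall c, atom c -> incident v c -> c = e)
    by (intros c Hc hvc; apply NNPP; intro n; apply Hv; eauto).
  destruct (atom_other_end Es1 Et1 e v He hve) as [w [nwv Hw]].
  assert (hwe : incident w e) by (apply Hw; now right).
  pose proof (line_iso_atom Hf e He) as Hfe.
  destruct (classic (exists b, atom b /\ b <> e /\ incident w b)) as [[b [Hb [nbe hwb]]] | Hwl].
  - (* w is matched to z, so v takes the other end of f e *)
    destruct (same_star_of_two_atoms b e w Hb He nbe hwb hwe) as [z Hz].
    assert (hze : incident z (f e)) by (apply Hz; auto).
    destruct (atom_other_end Es2 Et2 (f e) z Hfe hze) as [x [nxz Hx]].
    exists x. apply (same_star_of_leaf e v w x); auto.
    + apply Hx. now right.
    + intros c Hc nce hwc hxc. apply nce, (line_iso_inj Hf).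
      apply (atom_eq_of_incident2 Es2 Et2 (f c) (f e) z x); auto.
      * apply (line_iso_atom Hf); auto.
      * apply Hz; auto.
      * apply Hx. now right.
  - destruct (atom_ends Es2 Et2 (f e) Hfe) as [x [y [_ [_ Hx]]]].
    exists x. apply (same_star_of_leaf e v w x); auto.
    + apply Hx. now left.
    + intros c Hc nce hwc. exfalso. apply Hwl. eauto.
Qed.

Lemma same_star_twin v w x :
  E1 v w -> same_star f v x -> same_star f w x -> exists x', x' <> x /\ same_star f v x'.
Proof.
  intros Evw Hv Hw.
  pose proof (edge_pair_atom Es1 Et1 Evw) as He.
  assert (hve : incident v (edge_pair Evw)) by (apply incident_edge_pair; now left).
  assert (hwe : incident w (edge_pair Evw)) by (apply incident_edge_pair; now right).
  assert (nvw : v <> w) by (intros <-; exact (triangle_free_irrefl Et1 v Evw)).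
  assert (Hvw : forall c, atom c -> incident v c <-> incident w c)
    by (intros c Hc; rewrite (Hv c Hc), (Hw c Hc); tauto).
  assert (Honly : forall c, atom c -> incident v c -> c = edge_pair Evw)
    by (intros c Hc hvc; exact (atom_eq_edge_pair Es1 Et1 c Evw Hc hvc (proj1 (Hvw c Hc) hvc))).
  destruct (atom_other_end Es2 Et2 (f (edge_pair Evw)) x (line_iso_atom Hf _ He)
              (proj1 (Hv _ He) hve)) as [x' [nx Hx']].
  exists x'. split; [exact nx|].
  apply (same_star_of_leaf (edge_pair Evw) v w x'); auto.
  - apply Hx'. now right.
  - intros c Hc nce hwc. exfalso. apply nce, Honly, Hvw; auto.
Qed.

Lemma same_star_adjacent v x x' :
  same_star f v x -> same_star f v x' -> x <> x' -> E2 x x'.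
Proof.
  intros Hx Hx' nxx'. destruct (bicolored_atom_at X1 v) as [e [He hve]].
  exact (atom_edge Es2 Et2 (f e) x x' (line_iso_atom Hf e He)
           (proj1 (Hx e He) hve) (proj1 (Hx' e He) hve) nxx').
Qed.

(* The other end w of an edge at v is matched to x or x', and x, x' have the
   same star. *)
Lemma same_star_second_preimage v x x' :
  same_star f v x -> same_star f v x' -> x' <> x -> exists v', v' <> v /\ same_star f v' x.
Proof.
  intros Hx Hx' nx. destruct (bicolored_atom_at X1 v) as [e [He hve]].
  destruct (atom_other_end Es1 Et1 e v He hve) as [w [nwv Hw]].
  destruct (same_star_exists w) as [z Hz].
  exists w. split; [exact nwv|].
  assert (hze : incident z (f e)) by (apply Hz, Hw; auto).
  destruct (proj1 (atom_incident_iff Es2 Et2 (f e) x x' (line_iso_atom Hf e He)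
                     (proj1 (Hx e He) hve) (proj1 (Hx' e He) hve) (not_eq_sym nx) z) hze)
    as [<- | <-]; [exact Hz|].
  intros c Hc. rewrite (Hz c Hc), <- (Hx' c Hc), (Hx c Hc). tauto.
Qed.

Lemma vertex_corr_exists v : exists x, vertex_corr f c1 c2 v x.
Proof.
  destruct (same_star_exists v) as [x Hx].
  destruct (classic (exists x', x' <> x /\ same_star f v x')) as [[x' [nx Hx']] | Huniq].
  - destruct (Bool.bool_dec (c1 v) (c2 x)) as [Ec | Nc].
    + exists x. split; auto.
    + exists x'. split; [exact Hx'|]. intros _.
      pose proof (proj1 (proj2 X2) x x' (same_star_adjacent v x x' Hx Hx' (not_eq_sym nx))).
      destruct (c1 v), (c2 x), (c2 x'); congruence.
  - exists x. split; [exact Hx | intro H; contradiction].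
Qed.

Lemma vertex_corr_unique v x x' :
  vertex_corr f c1 c2 v x -> vertex_corr f c1 c2 v x' -> x = x'.
Proof.
  intros [Hx Cx] [Hx' Cx']. apply NNPP; intro nxx'.
  apply (proj1 (proj2 X2) x x' (same_star_adjacent v x x' Hx Hx' nxx')).
  rewrite <- (Cx (ex_intro _ x' (conj (not_eq_sym nxx') Hx'))).
  exact (Cx' (ex_intro _ x (conj nxx' Hx))).
Qed.

(* Adjacent vertices with the same image would both be ambiguous, hence
   coloured like their image. *)
Lemma vertex_corr_edge v w x y :
  vertex_corr f c1 c2 v x -> vertex_corr f c1 c2 w y -> E1 v w -> E2 x y.
Proof.
  intros [Hx Cx] [Hy Cy] Evw.
  pose proof (edge_pair_atom Es1 Et1 Evw) as He.
  destruct (classic (x = y)) as [<- | nxy].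
  - exfalso. apply (proj1 (proj2 X1) v w Evw).
    rewrite (Cx (same_star_twin v w x Evw Hx Hy)).
    symmetry. exact (Cy (same_star_twin w v x (Es1 v w Evw) Hy Hx)).
  - apply (atom_edge Es2 Et2 (f (edge_pair Evw))); auto.
    + apply (line_iso_atom Hf); auto.
    + apply Hx; auto. apply incident_edge_pair. now left.
    + apply Hy; auto. apply incident_edge_pair. now right.
Qed.

Lemma vertex_corr_of_inverse v x : vertex_corr g c2 c1 x v -> vertex_corr f c1 c2 v x.
Proof.
  intros [Hv Cv]. assert (Hx : same_star f v x) by (apply same_star_sym, Hv).
  split; [exact Hx|]. intros [x' [nx Hx']].
  destruct (same_star_second_preimage v x x' Hx Hx' nx) as [v' [nv Hv']].
  symmetry. apply Cv. exists v'. split; [exact nv | apply same_star_sym, Hv'].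
Qed.

End VertexCorrespondence.

Lemma vertex_corr_sym {V1 V2 : Type} {E1 : V1 -> V1 -> Prop} {E2 : V2 -> V2 -> Prop}
  {c1 : V1 -> bool} {c2 : V2 -> bool} {f : B0 E1 -> B0 E2} {g : B0 E2 -> B0 E1}
  (X1 : bicolored_no_isolated E1 c1) (X2 : bicolored_no_isolated E2 c2) (Hf : line_iso f g)
  v x : vertex_corr f c1 c2 v x <-> vertex_corr g c2 c1 x v.
Proof.
  split; [exact (vertex_corr_of_inverse X2 X1 (line_iso_sym Hf) x v)
         | exact (vertex_corr_of_inverse X1 X2 Hf v x)].
Qed.

Lemma graph_iso_of_bijective_rel {V1 V2 : Type} (E1 : V1 -> V1 -> Prop) (E2 : V2 -> V2 -> Prop)
  (R : V1 -> V2 -> Prop) :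
  (forall v, exists x, R v x) -> (forall x, exists v, R v x) ->
  (forall v x x', R v x -> R v x' -> x = x') -> (forall v v' x, R v x -> R v' x -> v = v') ->
  (forall v w x y, R v x -> R w y -> (E1 v w <-> E2 x y)) -> graph_iso E1 E2.
Proof.
  intros Htot Hsurj Hfun Hinj Hedge.
  set (h := fun v => proj1_sig (constructive_indefinite_description _ (Htot v))).
  set (k := fun x => proj1_sig (constructive_indefinite_description _ (Hsurj x))).
  assert (Hh : forall v, R v (h v))
    by (intro v; exact (proj2_sig (constructive_indefinite_description _ (Htot v)))).
  assert (Hk : forall x, R (k x) x)
    by (intro x; exact (proj2_sig (constructive_indefinite_description _ (Hsurj x)))).
  exists h, k. split; [|split].
  - intro v. exact (Hinj _ _ _ (Hk (h v)) (Hh v)).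
  - intro x. exact (Hfun _ _ _ (Hh (k x)) (Hk x)).
  - intros v w. exact (Hedge v w (h v) (h w) (Hh v) (Hh w)).
Qed.

Theorem proposition4p4 (V1 : Type) (E1 : V1 -> V1 -> Prop)
  (V2 : Type) (E2 : V2 -> V2 -> Prop)
  (hs1 : symmetric_rel E1) (hs2 : symmetric_rel E2)
  (hb1 : bipartite E1) (hb2 : bipartite E2)
  (hi1 : forall v, ~ isolated E1 v) (hi2 : forall v, ~ isolated E2 v) :
  poset_iso E1 E2 -> graph_iso E1 E2.
Proof.
  intros [f [g Hfg]].
  destruct hb1 as [c1 Hc1], hb2 as [c2 Hc2].
  assert (X1 : bicolored_no_isolated E1 c1) by (split; [|split]; assumption).
  assert (X2 : bicolored_no_isolated E2 c2) by (split; [|split]; assumption).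
  assert (Hf : line_iso f g)
    by exact (order_iso_line_iso Hfg hs1 (proper_coloring_triangle_free Hc1)
                                     hs2 (proper_coloring_triangle_free Hc2)).
  pose proof (line_iso_sym Hf) as Hg.
  apply (graph_iso_of_bijective_rel E1 E2 (vertex_corr f c1 c2)).
  - exact (vertex_corr_exists X1 X2 Hf).
  - intro x. destruct (vertex_corr_exists X2 X1 Hg x) as [v Hv].
    exists v. exact (proj2 (vertex_corr_sym X1 X2 Hf v x) Hv).
  - exact (vertex_corr_unique X1 X2 Hf).
  - intros v v' x Hv Hv'.
    apply (vertex_corr_unique X2 X1 Hg x); apply (vertex_corr_sym X1 X2 Hf); assumption.
  - intros v w x y Hv Hw. split; [exact (vertex_corr_edge X1 X2 Hf v w x y Hv Hw)|].
    apply (vertex_corr_edge X2 X1 Hg); apply (vertex_corr_sym X1 X2 Hf); assumption.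
Qed.
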